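(* Let $n\geq 2$ and $m\geq 2$ be integers with $mn$ even. Then the total resonance graphs $R_t(C(m-1,n))$ and $R_t(T(m,n))$ are bipartite. Consequently the flip graphs $\mathcal{T}(C(m,n))$ and $\mathcal{T}(T(m,n))$ of the quadriculated cylinder and torus are bipartite.
   Context: The $(m,n)$-quadriculated cylinder $C(m,n)$ is obtained from an $m\times n$ chessboard ($m$ rows each of $n$ unit squares) by identifying its left and right sides; the $(m,n)$-quadriculated torus $T(m,n)$ is obtained by further identifying top and bottom sides. As graphs, $C(k,n)$ denotes the graph formed by the grid points and unit segments of the quadriculated cylinder with $k$ rows of squares: it consists of $k+1$ cycles of length $n$ (a cycle of length $2$ being a pair of parallel edges), consecutive ones joined by a perfect matching of ''vertical'' edges; it is viewed as embedded in the sphere by capping both ends, so its faces are the $kn$ unit squares and two faces bounded by the two end cycles. $T(m,n)$ as a graph is the grid graph of the quadriculated torus (vertices the $mn$ grid points, edges the unit segments), cellularly embedded in the torus with faces the $mn$ unit squares. The inner dual of the region $C(m,n)$ is the graph $C(m-1,n)$ and the inner dual of $T(m,n)$ is $T(m,n)$. A domino is a union of two adjacent unit squares and a tiling is a set of dominoes with disjoint interiors covering the region; a flip removes two side-by-side parallel dominoes forming a $2\times 2$ block and replaces them by the other two dominoes covering the block. The flip graph $\mathcal{T}(R)$ has the tilings of $R$ as vertices, two being adjacent iff one is obtained from the other by a flip. For a graph $G$ embedded on a surface, the total resonance graph $R_t(G)$ has the perfect matchings of $G$ as vertices, two perfect matchings $M_1,M_2$ being adjacent iff $M_1\oplus M_2$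 is exactly the edge set of the boundary cycle of one face. *)

From mathcomp Require Import all_boot.
Set Implicit Arguments.
Unset Strict Implicit.
Unset Printing Implicit Defensive.

(* The embedding
   is recorded by a finite type of faces F and the boundary edge set of each
   face [bd : F -> {set E}]. *)

Definition incident (V E : finType) (ends : E -> V * V) (v : V) (e : E) : bool :=
  ((ends e).1 == v) || ((ends e).2 == v).

Definition perfect_matching (V E : finType) (ends : E -> V * V) (M : {set E}) : Prop :=
  forall v : V, #|[set e in M | incident ends v e]| = 1.

Definition total_res_adj (V E F : finType) (ends : E -> V * V) (bd : F -> {set E})
    (M1 M2 : {set E}) : Prop :=
  exists f : F, (M1 :\: M2) :|: (M2 :\: M1) = bd f.

Definition bipartite_on (T : Type) (P : T -> Prop) (adj : T -> T -> Prop) : Prop :=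
  exists c : T -> bool, forall x y, P x -> P y -> adj x y -> c x <> c y.

Definition Rt_bipartite (V E F : finType) (ends : E -> V * V) (bd : F -> {set E}) : Prop :=
  bipartite_on (perfect_matching ends) (total_res_adj ends bd).

(* vertices (i,j), 0 <= i <= k, j in Z_n;
   horizontal edge inl (i,j) : (i,j) -- (i,j+1 mod n);
   vertical edge   inr (i,j) : (i,j) -- (i+1,j), i < k.
   faces: inl (i,j) the unit square with corners (i,j),(i,j+1),(i+1,j),(i+1,j+1);
          inr false / inr true the two end faces bounded by the cycles i = 0, i = k. *)
Definition cylV (k n : nat) := ('I_k.+1 * 'I_n)%type.
Definition cylE (k n : nat) := (('I_k.+1 * 'I_n) + ('I_k * 'I_n))%type.
Definition cylF (k n : nat) := (('I_k * 'I_n) + bool)%type.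

Definition cyl_ends (k n : nat) (e : cylE k n) : cylV k n * cylV k n :=
  match e with
  | inl (i, j) => ((i, j), (i, ordS j))
  | inr (i, j) => ((inord i, j), (inord i.+1, j))
  end.

Definition cyl_bd (k n : nat) (f : cylF k n) : {set cylE k n} :=
  match f with
  | inl (i, j) =>
      [set inl (inord i, j); inl (inord i.+1, j); inr (i, j); inr (i, ordS j)]
  | inr false => [set inl (ord0, j) | j : 'I_n]
  | inr true => [set inl (ord_max, j) | j : 'I_n]
  end.

Definition torV (m n : nat) := ('I_m * 'I_n)%type.
Definition torE (m n : nat) := (('I_m * 'I_n) + ('I_m * 'I_n))%type.
Definition torF (m n : nat) := ('I_m * 'I_n)%type.

Definition tor_ends (m n : nat) (e : torE m n) : torV m n * torV m n :=
  match e with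
  | inl (i, j) => ((i, j), (i, ordS j))
  | inr (i, j) => ((i, j), (ordS i, j))
  end.

Definition tor_bd (m n : nat) (f : torF m n) : {set torE m n} :=
  let: (i, j) := f in
  [set inl (i, j); inl (ordS i, j); inr (i, j); inr (i, ordS j)].

(* unit squares are (i,j) : 'I_m * 'I_n (row i, column j). *)
Definition sq (m n : nat) := ('I_m * 'I_n)%type.

Definition cyl_sq_adj (m n : nat) (s t : sq m n) : bool :=
  ((s.1 == t.1) && ((t.2 == ordS s.2) || (s.2 == ordS t.2))) ||
  ((s.2 == t.2) && ((t.1.+1 == s.1 :> nat) || (s.1.+1 == t.1 :> nat))).

Definition tor_sq_adj (m n : nat) (s t : sq m n) : bool :=
  ((s.1 == t.1) && ((t.2 == ordS s.2) || (s.2 == ordS t.2))) ||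
  ((s.2 == t.2) && ((t.1 == ordS s.1) || (s.1 == ordS t.1))).

Definition domino (m n : nat) (adj : rel (sq m n)) (D : {set sq m n}) : bool :=
  [exists s, exists t, adj s t && (D == [set s; t])].

Definition tiling (m n : nat) (adj : rel (sq m n)) (T : {set {set sq m n}}) : Prop :=
  partition T [set: sq m n] /\ (forall D, D \in T -> domino adj D).

Definition hpair (m n : nat) (i i' : 'I_m) (j : 'I_n) : {set {set sq m n}} :=
  [set [set (i, j); (i, ordS j)]; [set (i', j); (i', ordS j)]].
Definition vpair (m n : nat) (i i' : 'I_m) (j : 'I_n) : {set {set sq m n}} :=
  [set [set (i, j); (i', j)]; [set (i, ordS j); (i', ordS j)]].

Definition flip_at (m n : nat) (i i' : 'I_m) (j : 'I_n) (T1 T2 : {set {set sq m n}}) : Prop :=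
  (hpair i i' j \subset T1 /\ T2 = (T1 :\: hpair i i' j) :|: vpair i i' j) \/
  (vpair i i' j \subset T1 /\ T2 = (T1 :\: vpair i i' j) :|: hpair i i' j).

Definition cyl_flip (m n : nat) (T1 T2 : {set {set sq m n}}) : Prop :=
  exists (i i' : 'I_m) (j : 'I_n), i.+1 = i' :> nat /\ flip_at i i' j T1 T2.

Definition tor_flip (m n : nat) (T1 T2 : {set {set sq m n}}) : Prop :=
  exists (i : 'I_m) (j : 'I_n), flip_at i (ordS i) j T1 T2.

Definition cyl_flip_bipartite (m n : nat) : Prop :=
  bipartite_on (tiling (@cyl_sq_adj m n)) (@cyl_flip m n).
Definition tor_flip_bipartite (m n : nat) : Prop :=
  bipartite_on (tiling (@tor_sq_adj m n)) (@tor_flip m n).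

(* Colour a perfect matching (resp. tiling) by the parity of its intersection
   with a fixed set W of edges (resp. dominoes).  Adjacent vertices differ by
   the boundary of a face (resp. by the two domino pairs of a flip block), so
   the colouring is proper as soon as every face (block) meets W an odd number
   of times.  Horizontal edges (dominoes) in even rows do this for every square
   whose two rows have opposite parity, i.e. always on the cylinder and on the
   torus with m even; symmetrically, even columns work when n is even.  The end
   faces of the capped cylinder need care: for n even, W = vertical edges in
   even columns plus the horizontal edges of column 0 (which meet each square
   twice or not at all) meets each end face once; for n odd the end faces are
   odd cycles, never the symmetric difference of two perfect matchings. *)

From mathcomp Require Import all_boot zify.

Set Implicit Arguments.
Unset Strict Implicit.
Unset Printing Implicit Defensive.

Definition symdiff (T : finType) (A B : {set T}) : {set T} := (A :\: B) :|: (B :\: A).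

Lemma in_symdiff (T : finType) (A B : {set T}) x :
  (x \in symdiff A B) = (x \in A) (+) (x \in B).
Proof. by rewrite !inE; case: (x \in A); case: (x \in B). Qed.

Lemma symdiffC (T : finType) (A B : {set T}) : symdiff A B = symdiff B A.
Proof. by rewrite /symdiff setUC. Qed.

Lemma odd_card_symdiffI (T : finType) (A B W : {set T}) :
  odd #|symdiff A B :&: W| = odd #|A :&: W| (+) odd #|B :&: W|.
Proof.
set X := A :&: W; set Y := B :&: W.
have -> : symdiff A B :&: W = (X :|: Y) :\: (X :&: Y).
  by apply/setP => x; rewrite !inE; case: (x \in A); case: (x \in B); case: (x \in W).
have := cardsUI X Y; have := cardsID (X :&: Y) (X :|: Y).
rewrite (setIidPr (subset_trans (subsetIl X Y) (subsetUl X Y))) => <- /(congr1 odd).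
by rewrite !oddD => <-; case: (odd _); case: (odd _).
Qed.

Lemma symdiff_replace (T : finType) (A H V : {set T}) :
  H \subset A -> V :&: A \subset H -> symdiff A ((A :\: H) :|: V) = symdiff H V.
Proof.
move=> /subsetP sHA /subsetP sVAH; apply/setP => x; move: (sHA x) (sVAH x).
rewrite !inE; case: (x \in A); case: (x \in H); case: (x \in V) => //=.
- by move=> _ /(_ isT).
- by move=> /(_ isT).
- by move=> /(_ isT).
Qed.

Lemma trivIset_meet_subset (T : finType) (P H V : {set {set T}}) :
  trivIset P -> H \subset P ->
  {in V, forall D : {set T}, exists2 A, A \in H & exists2 s, s \in A & s \in D} ->
  V :&: P \subset H.
Proof.
move=> /trivIsetP triv /subsetP sHP meetH; apply/subsetP => D /setIP [DV DP].
have [A AH [s sA sD]] := meetH D DV.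
case: (eqVneq A D) => [<- // | neqAD].
by have := triv A D (sHP A AH) DP neqAD; move/disjointFr/(_ sA); rewrite sD.
Qed.

Lemma card_setI_uniq (T : finType) (s : seq T) (W : {set T}) :
  uniq s -> #|[set x in s] :&: W| = count (mem W) s.
Proof.
move=> s_uniq; have -> : [set x in s] :&: W = [set x in filter (mem W) s].
  by apply/setP => x; rewrite !inE mem_filter andbC.
by rewrite cardsE (card_uniqP _) ?size_filter ?filter_uniq.
Qed.

Lemma card_set4I (T : finType) (a b c d : T) (W : {set T}) :
  uniq [:: a; b; c; d] ->
  #|[set a; b; c; d] :&: W| = (a \in W) + (b \in W) + (c \in W) + (d \in W).
Proof.
move=> abcd_uniq; have -> : [set a; b; c; d] = [set x in [:: a; b; c; d]].
  by apply/setP => x; rewrite !inE !orbA.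
by rewrite card_setI_uniq //= !addnA addn0.
Qed.

Lemma card_set2I_xor (T : finType) (a b : T) (W : {set T}) :
  (a \in W) (+) (b \in W) -> #|[set a; b] :&: W| = 1.
Proof.
have ab_uniq : (a \in W) (+) (b \in W) -> uniq [:: a; b].
  by rewrite /= inE andbT; apply: contraTneq => ->; rewrite addbb.
move=> aWxbW; have -> : [set a; b] = [set x in [:: a; b]] by apply/setP => x; rewrite !inE.
by rewrite card_setI_uniq ?ab_uniq //=; move: aWxbW; case: (a \in W); case: (b \in W).
Qed.

Lemma setI_set2_eq0 (T : finType) (a b : T) (W : {set T}) :
  a \notin W -> b \notin W -> [set a; b] :&: W = set0.
Proof.
move=> aW bW; apply/setP => x; rewrite !inE.
by apply/negbTE/andP => -[/orP [] /eqP ->]; exact/negP.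
Qed.

Lemma bipartite_on_parity (T : finType) (P : {set T} -> Prop)
    (adj : {set T} -> {set T} -> Prop) (W : {set T}) :
  (forall X Y, P X -> P Y -> adj X Y -> odd #|symdiff X Y :&: W|) -> bipartite_on P adj.
Proof.
move=> oddW; exists (fun X => odd #|X :&: W|) => X Y PX PY XY.
by have := oddW X Y PX PY XY; rewrite odd_card_symdiffI; case: (odd _); case: (odd _).
Qed.

Lemma ordS_neq n (j : 'I_n) : 1 < n -> ordS j != j.
Proof.
move=> n_gt1; apply/eqP => /(congr1 val) /=.
case: (ltnP j.+1 n) => [lt_jn | le_nj]; first by rewrite modn_small //; lia.
have -> : j.+1 = n by have := ltn_ord j; lia.
by rewrite modnn; lia.
Qed.

Lemma odd_ordS n (j : 'I_n) : ~~ odd n -> odd (ordS j) = ~~ odd j.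
Proof. by move=> n_even; rewrite /= odd_mod ?(negbTE n_even). Qed.

Section PerfectMatchings.

Variables (V E : finType) (ends : E -> V * V).

Lemma perfect_matching_incident_eq M v e1 e2 :
  perfect_matching ends M -> incident ends v e1 -> incident ends v e2 ->
  e1 \in M -> e2 \in M -> e1 = e2.
Proof.
move=> /(_ v) /eqP /cards1P [e0 Mv] ve1 ve2 Me1 Me2.
have inMv e : e \in M -> incident ends v e -> e = e0.
  by move=> Me ve; apply/set1P; rewrite -Mv inE Me.
by rewrite (inMv e1 Me1 ve1) (inMv e2 Me2 ve2).
Qed.

Lemma even_alternating_cycle n (e : 'I_n -> E) M1 M2 :
  (forall j, e j != e (ordS j)) ->
  (forall j, exists v, incident ends v (e j) && incident ends v (e (ordS j))) ->
  perfect_matching ends M1 -> perfect_matching ends M2 ->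
  (forall j, e j \in symdiff M1 M2) -> ~~ odd n.
Proof.
move=> neq_e adj_e pM1 pM2 e_sym.
pose x j := e j \in M1.
have alt j : x (ordS j) = ~~ x j.
  have [v /andP [vj vSj]] := adj_e j.
  have not_both M : perfect_matching ends M -> ~~ ((e j \in M) && (e (ordS j) \in M)).
    move=> pM; apply/andP => -[Mj MSj]; move/eqP: (neq_e j); apply.
    exact: (perfect_matching_incident_eq pM vj vSj).
  move: (not_both _ pM1) (not_both _ pM2) (e_sym j) (e_sym (ordS j)).
  rewrite /x !in_symdiff.
  by case: (e j \in M1); case: (e j \in M2); case: (e (ordS j) \in M1);
    case: (e (ordS j) \in M2).
have -> : n = (\sum_(j < n) x j).*2.
  rewrite -addnn {2}(reindex_inj (@ordS_inj n)) -big_split /=.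
  by rewrite (eq_bigr (fun _ => 1)) ?sum1_card ?card_ord // => j _; rewrite alt; case: (x j).
by rewrite odd_double.
Qed.

End PerfectMatchings.

Lemma Rt_bipartite_parity (V E F : finType) (ends : E -> V * V) (bd : F -> {set E})
    (W : {set E}) :
  (forall f M1 M2, perfect_matching ends M1 -> perfect_matching ends M2 ->
     symdiff M1 M2 = bd f -> odd #|bd f :&: W|) ->
  Rt_bipartite ends bd.
Proof.
move=> odd_faces; apply: (bipartite_on_parity (W := W)) => M1 M2 pM1 pM2 [f M12f].
by rewrite /symdiff M12f; exact: (odd_faces f M1 M2).
Qed.

Section Cylinder.

Variables k n : nat.
Hypothesis n_gt1 : 1 < n.

Definition cyl_even_row_edges : {set cylE k n} :=
  [set e : cylE k n | if e is inl p then ~~ odd p.1 else false].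

Definition cyl_even_col_edges : {set cylE k n} :=
  [set e : cylE k n | match e with inl p => p.2 == 0 :> nat | inr p => ~~ odd p.2 end].

Lemma cyl_square_uniq (i : 'I_k) (j : 'I_n) :
  uniq [:: inl (inord i, j); inl (inord i.+1, j); inr (i, j); inr (i, ordS j) : cylE k n].
Proof.
rewrite /= !inE !negb_or /= !andbT; apply/andP; split.
- apply/eqP => -[] /(congr1 (@nat_of_ord _)).
  by rewrite !inordK ?ltnS ?(ltnW (ltn_ord i)) //; exact: n_Sn.
- by apply/eqP => -[/eqP]; rewrite eq_sym (negbTE (ordS_neq j n_gt1)).
Qed.

Lemma cyl_row_symdiff_even (r : 'I_k.+1) M1 M2 :
  perfect_matching (@cyl_ends k n) M1 -> perfect_matching (@cyl_ends k n) M2 ->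
  symdiff M1 M2 = [set inl (r, j) | j : 'I_n] -> ~~ odd n.
Proof.
move=> pM1 pM2 M12r; apply: (even_alternating_cycle (e := fun j => inl (r, j)) _ _ pM1 pM2).
- by move=> j; apply/eqP => -[/eqP]; rewrite eq_sym (negbTE (ordS_neq j n_gt1)).
- by move=> j; exists (r, ordS j); rewrite /incident /= !eqxx orbT.
- by move=> j; rewrite M12r; apply: imset_f.
Qed.

Lemma cyl_Rt_bipartite : Rt_bipartite (@cyl_ends k n) (@cyl_bd k n).
Proof.
case/boolP: (odd n) => [n_odd | n_even].
  apply: (Rt_bipartite_parity (W := cyl_even_row_edges)) => -[[i j] | b] M1 M2 pM1 pM2 M12f.
    rewrite card_set4I ?cyl_square_uniq // !inE /= !inordK ?ltnS ?(ltnW (ltn_ord i)) //.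
    by rewrite oddS; case: (odd i).
  by case: b M12f => /(cyl_row_symdiff_even pM1 pM2); rewrite n_odd.
apply: (Rt_bipartite_parity (W := cyl_even_col_edges)) => -[[i j] | b] M1 M2 _ _ _.
  rewrite card_set4I ?cyl_square_uniq // !inE /= odd_ordS //.
  by case: (odd j); case: (j : nat).
have n_gt0 : 0 < n by lia.
have row_cut r : [set inl (r, j) | j : 'I_n] :&: cyl_even_col_edges =
                 [set inl (r, Ordinal n_gt0)].
  apply/setP => e; rewrite !inE; apply/andP/eqP => [[/imsetP [j _ ->]] /eqP j0 | ->].
    by do 2 f_equal; apply: val_inj.
  by split => //; apply: imset_f.
by case: b; rewrite /= row_cut cards1.
Qed.

End Cylinder.

Section Torus.

Variables m n : nat.
Hypotheses (m_gt1 : 1 < m) (n_gt1 : 1 < n).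

Definition tor_even_row_edges : {set torE m n} :=
  [set e : torE m n | if e is inl p then ~~ odd p.1 else false].

Definition tor_even_col_edges : {set torE m n} :=
  [set e : torE m n | if e is inr p then ~~ odd p.2 else false].

Lemma tor_square_uniq (i : 'I_m) (j : 'I_n) :
  uniq [:: inl (i, j); inl (ordS i, j); inr (i, j); inr (i, ordS j) : torE m n].
Proof.
rewrite /= !inE !negb_or /= !andbT; apply/andP; split.
- by apply/eqP => -[/eqP]; rewrite eq_sym (negbTE (ordS_neq i m_gt1)).
- by apply/eqP => -[/eqP]; rewrite eq_sym (negbTE (ordS_neq j n_gt1)).
Qed.

Lemma tor_Rt_bipartite : ~~ odd (m * n) -> Rt_bipartite (@tor_ends m n) (@tor_bd m n).
Proof.
rewrite oddM negb_and => /orP [m_even | n_even].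
  apply: (Rt_bipartite_parity (W := tor_even_row_edges)) => -[i j] M1 M2 _ _ _.
  by rewrite card_set4I ?tor_square_uniq // !inE /= odd_ordS //; case: (odd i).
apply: (Rt_bipartite_parity (W := tor_even_col_edges)) => -[i j] M1 M2 _ _ _.
by rewrite card_set4I ?tor_square_uniq // !inE /= odd_ordS //; case: (odd j).
Qed.

End Torus.

Section Flips.

Variables m n : nat.

Lemma flip_at_symdiff (i i' : 'I_m) (j : 'I_n) (T1 T2 : {set {set sq m n}}) :
  trivIset T1 -> flip_at i i' j T1 T2 ->
  symdiff T1 T2 = symdiff (hpair i i' j) (vpair i i' j).
Proof.
move=> triv [[sHT1 ->] | [sVT1 ->]]; rewrite symdiff_replace ?(symdiffC (vpair _ _ _)) //.
  apply: trivIset_meet_subset => // D; rewrite !inE => /orP [] /eqP ->;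
    exists [set (i, j); (i, ordS j)]; rewrite ?inE ?eqxx //.
  - by exists (i, j); rewrite !inE eqxx.
  - by exists (i, ordS j); rewrite !inE eqxx ?orbT.
apply: trivIset_meet_subset => // D; rewrite !inE => /orP [] /eqP ->;
  exists [set (i, j); (i', j)]; rewrite ?inE ?eqxx //.
- by exists (i, j); rewrite !inE eqxx.
- by exists (i', j); rewrite !inE eqxx ?orbT.
Qed.

Definition even_row_dominoes : {set {set sq m n}} :=
  [set D : {set sq m n} | D \subset [set s : sq m n | ~~ odd s.1]].

Definition even_col_dominoes : {set {set sq m n}} :=
  [set D : {set sq m n} | D \subset [set s : sq m n | ~~ odd s.2]].

Lemma odd_flip_even_rows (i i' : 'I_m) (j : 'I_n) :
  odd i' = ~~ odd i ->
  odd #|symdiff (hpair i i' j) (vpair i i' j) :&: even_row_dominoes|.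
Proof.
move=> odd_i'; rewrite odd_card_symdiffI card_set2I_xor ?setI_set2_eq0 ?cards0 //;
by rewrite !inE !subUset !sub1set !inE /= odd_i'; case: (odd i).
Qed.

Lemma odd_flip_even_cols (i i' : 'I_m) (j : 'I_n) :
  odd (ordS j) = ~~ odd j ->
  odd #|symdiff (hpair i i' j) (vpair i i' j) :&: even_col_dominoes|.
Proof.
move=> odd_Sj; rewrite odd_card_symdiffI setI_set2_eq0 ?cards0 ?card_set2I_xor //;
by rewrite !inE !subUset !sub1set !inE /= odd_Sj; case: (odd j).
Qed.

Lemma flip_bipartite_parity (adj : rel (sq m n)) flip (W : {set {set sq m n}}) :
  (forall T1 T2, flip T1 T2 -> exists i i' j,
     flip_at i i' j T1 T2 /\ odd #|symdiff (hpair i i' j) (vpair i i' j) :&: W|) ->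
  bipartite_on (tiling adj) flip.
Proof.
move=> odd_flips; apply: (bipartite_on_parity (W := W)).
move=> T1 T2 [/partition_trivIset triv _] _ /odd_flips [i [i' [j [fl oddW]]]].
by rewrite (flip_at_symdiff triv fl).
Qed.

End Flips.

Lemma cyl_flip_graph_bipartite m n : cyl_flip_bipartite m n.
Proof.
apply: (flip_bipartite_parity _ (W := even_row_dominoes m n)) => T1 T2 [i [i' [j [Si fl]]]].
by exists i, i', j; split => //; apply: odd_flip_even_rows; rewrite -Si.
Qed.

Lemma tor_flip_graph_bipartite m n : ~~ odd (m * n) -> tor_flip_bipartite m n.
Proof.
rewrite oddM negb_and => /orP [m_even | n_even].
  apply: (flip_bipartite_parity _ (W := even_row_dominoes m n)) => T1 T2 [i [j fl]].
  by exists i, (ordS i), j; split => //; apply: odd_flip_even_rows; apply: odd_ordS.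
apply: (flip_bipartite_parity _ (W := even_col_dominoes m n)) => T1 T2 [i [j fl]].
by exists i, (ordS i), j; split => //; apply: odd_flip_even_cols; apply: odd_ordS.
Qed.

Theorem corollary2p7 (m n : nat) (hn : 2 <= n) (hm : 2 <= m) (hmn : ~~ odd (m * n)) :
  [/\ Rt_bipartite (@cyl_ends m.-1 n) (@cyl_bd m.-1 n),
      Rt_bipartite (@tor_ends m n) (@tor_bd m n),
      cyl_flip_bipartite m n &
      tor_flip_bipartite m n].
Proof.
split.
- exact: cyl_Rt_bipartite.
- exact: tor_Rt_bipartite.
- exact: cyl_flip_graph_bipartite.
- exact: tor_flip_graph_bipartite.
Qed.
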